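(* Let $b\ge2$, $n\ge1$ be integers and $\mathcal D=\{d,\dots,d+b-1\}$ a set of consecutive integers containing $0$. For $i,j\in\Omega_n(-b,\mathcal D)$, the transition probability $p_{i,j}=\Pr(C_{t+1}=j\mid C_t=i)$ of the $n$-carry process over $(-b,\mathcal D)$ is $$p_{i,j}=\frac{1}{b^n}\sum_{r=0}^{\,-j+1+\left\lfloor\frac{-i-1+(1-n)d}{b}\right\rfloor}(-1)^r\binom{n+1}{r}\binom{n-b(j-1+r)-i-1+(1-n)d}{n},$$ (an empty sum being $0$; in the range of summation the upper entries of the binomial coefficients are nonnegative integers, and $\binom{N}{n}=0$ for $0\le N<n$).
   Context: Carries process over the negative base $(-b,\mathcal D)$: let $\{X_{k,i}\}_{1\le k\le n,\ i\ge0}$ be independent random variables, each uniformly distributed on $\mathcal D$. Set $C_0=0$; for $i\ge0$ let $A_i$ be the unique element of $\mathcal D$ with $A_i\equiv C_i+X_{1,i}+\dots+X_{n,i}\pmod b$, and set $C_{i+1}=(C_i+X_{1,i}+\dots+X_{n,i}-A_i)/(-b)$. The state space $\Omega_n(-b,\mathcal D)$ is the set of integers $c$ with $\Pr(C_i=c)>0$ for some $i\ge0$. *)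

From HB Require Import structures.
From mathcomp Require Import all_boot all_order all_algebra.
Set Implicit Arguments. Unset Strict Implicit. Unset Printing Implicit Defensive.
Import Order.TTheory GRing.Theory Num.Theory.
Local Open Scope ring_scope.

(* Digit set D = {d, ..., d+b-1}; a digit is encoded by an offset x : 'I_b,
   standing for the digit d + x. *)

(* The unique element A of D with A = c + s (mod b). *)
Definition carry_digit (b : nat) (d c s : int) : int :=
  d + ((c + s - d) %% (b%:Z))%Z.

Definition carry_step (b : nat) (d c s : int) : int :=
  ((c + s - carry_digit b d c s) %/ (- (b%:Z)))%Z.

(* Outcome of the first T rows of the random digits: X_{k,i}, i < T, k < n. *)
Definition sample (n b T : nat) := {ffun 'I_T -> {ffun 'I_n -> 'I_b}}.

(* Value of the digit X_{k+1,i} (0-indexed k) for the outcome w (0 out of range). *)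
Definition digit (n b T : nat) (d : int) (w : sample n b T) (i k : nat) : int :=
  match (insub i : option 'I_T), (insub k : option 'I_n) with
  | Some i', Some k' => d + (nat_of_ord (w i' k'))%:Z
  | _, _ => 0
  end.

Fixpoint carry (n b T : nat) (d : int) (w : sample n b T) (i : nat) : int :=
  match i with
  | 0 => 0
  | i'.+1 => carry_step b d (carry d w i') (\sum_(k < n) digit d w i' k)
  end.

Definition prob (n b T : nat) (E : pred (sample n b T)) : rat :=
  #|[set w | E w]|%:R / #|{: sample n b T}|%:R.

Definition prob_carry (n b : nat) (d : int) (t : nat) (c : int) : rat :=
  prob (fun w : sample n b t => carry d w t == c).

Definition state_space (n b : nat) (d : int) (c : int) : Prop :=
  exists t : nat, 0 < prob_carry n b d t c.

Definition trans_prob (n b : nat) (d : int) (t : nat) (i j : int) : rat :=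
  prob (fun w : sample n b t.+1 => (carry d w t == i) && (carry d w t.+1 == j))
  / prob (fun w : sample n b t.+1 => carry d w t == i).

(* Generalized binomial coefficient binom(N, k) = N(N-1)...(N-k+1)/k! for N : int;
   agrees with 'C(N, k) for N >= 0. *)
Definition binz (N : int) (k : nat) : rat :=
  (\prod_(m < k) (N - m%:Z)%:~R) / (k`!)%:R.

Definition trans_formula (n b : nat) (d : int) (i j : int) : rat :=
  let U : int := - j + 1 + ((- i - 1 + (1 - n%:Z) * d) %/ b%:Z)%Z in
  (1 / (b%:R ^+ n)) *
  (if U < 0 then 0 else
   \sum_(r < (absz U).+1)
     (-1) ^+ r * ('C(n.+1, r))%:R *
     binz (n%:Z - b%:Z * (j - 1 + r%:Z) - i - 1 + (1 - n%:Z) * d) n).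

From HB Require Import structures.
From mathcomp Require Import all_boot all_order all_algebra.
From mathcomp Require Import ring zify.
Import Order.TTheory GRing.Theory Num.Theory.
Local Open Scope ring_scope.

(* Markov property: splitting a sample of t+1 rows into its first t rows and
   its last row, the events "C_t = i" and "C_{t+1} = j" factor, so p_{i,j} is
   the number of last rows x in {0..b-1}^n sending carry i to carry j, divided
   by b^n (trans_prob_step_count).  Writing the last digit row as offsets x_k
   from d, the new carry is j iff  sum_k x_k + y = M  for a (unique) y < b,
   where M = (1-n)d - i - jb + b - 1 (carry_target); so the count is the
   coefficient of X^M in P^(n+1), P = 1 + X + ... + X^(b-1).  Finally
   P^(n+1) = (1 - X^b)^(n+1) / (1 - X)^(n+1), which, by expanding the
   numerator binomially and the denominator as a (truncated) power series,
   gives  [X^M] P^(n+1) = sum_r (-1)^r C(n+1,r) C(M - br + n, n)  over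
   br <= M (coef_digit_poly_pow).  Reindexing this sum yields the formula.
   The argument only uses b > 0 and Pr(C_t = i) > 0. *)

(* Truncation at degree M of (1 - X)^-(n+1) = sum_k C(k+n, n) X^k. *)
Definition trunc_neg_binom (n M : nat) : {poly rat} :=
  \poly_(k < M.+1) ('C(k + n, n))%:R.

Lemma trunc_neg_binom_step n M :
  (1 - 'X) * trunc_neg_binom n.+1 M =
  trunc_neg_binom n M - ('C(M + n.+1, n.+1))%:R%:P * 'X^(M.+1).
Proof.
apply/polyP => l.
rewrite mulrBl mul1r !coefB coefXM coefCM coefXn /trunc_neg_binom !coef_poly.
case: l => [|l] /=; first by rewrite !add0n !binn subr0 mulr0 subr0.
rewrite eqSS; case: (ltngtP l M) => hlM.
- rewrite ltnS hlM (_ : (l < M.+1)%N) 1?ltnW // mulr0 subr0 addSn binS natrD.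
  by rewrite (_ : (l + n.+1 = (l + n).+1)%N) 1?addnS // [X in X - _]addrC addrK.
- by rewrite !ltnS (ltn_geF hlM) (leq_gtF (ltnW hlM)) subr0 mulr0 subr0.
- by rewrite hlM ltnn ltnSn mulr1 !sub0r.
Qed.

Lemma trunc_neg_binom0 M : (1 - 'X) * trunc_neg_binom 0 M = 1 - 'X^(M.+1).
Proof.
apply/polyP => l.
rewrite mulrBl mul1r !coefB coefXM coefXn coef1 /trunc_neg_binom !coef_poly.
case: l => [|l] /=; first by rewrite bin0 subr0.
rewrite eqSS; case: (ltngtP l M) => hlM.
- by rewrite ltnS hlM (_ : (l < M.+1)%N) 1?ltnW // !bin0 subrr sub0r oppr0.
- by rewrite !ltnS (ltn_geF hlM) (leq_gtF (ltnW hlM)) subrr.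
- by rewrite hlM ltnn ltnSn bin0.
Qed.

Lemma trunc_neg_binom_inverse n M :
  exists R : {poly rat}, (1 - 'X) ^+ n.+1 * trunc_neg_binom n M = 1 + 'X^(M.+1) * R.
Proof.
elim: n => [|n [R HR]]; first by exists (-1); rewrite expr1 trunc_neg_binom0 mulrN1.
exists (R - ('C(M + n.+1, n.+1))%:R%:P * (1 - 'X) ^+ n.+1).
by rewrite exprSr -mulrA trunc_neg_binom_step mulrBr HR; ring.
Qed.

Definition digit_poly (b : nat) : {poly rat} := \sum_(a < b) 'X^a.

Lemma digit_polyE b : (1 - 'X) * digit_poly b = 1 - 'X^b.
Proof.
rewrite -[X in _ = X - _](expr1n _ b) subrXX /digit_poly; congr (_ * _).
by apply: eq_bigr => a _; rewrite expr1n mul1r.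
Qed.

Lemma coef_digit_poly_pow n b M : ((digit_poly b) ^+ n.+1)`_M =
  \sum_(r < n.+2) (-1) ^+ r * ('C(n.+1, r))%:R *
      (if (b * r <= M)%N then ('C(M - b * r + n, n))%:R else 0).
Proof.
have [R HR] := trunc_neg_binom_inverse n M.
have E : digit_poly b ^+ n.+1 * (1 + 'X^(M.+1) * R) =
         (1 - 'X^b) ^+ n.+1 * trunc_neg_binom n M.
  by rewrite -HR -digit_polyE exprMn; ring.
have := congr1 (fun p : {poly rat} => p`_M) E.
rewrite mulrDr mulr1 coefD mulrCA coefXnM ltnSn addr0 => ->.
rewrite exprBn mulr_suml coef_sum; apply: eq_bigr => r _.
rewrite expr1n mulr1 -exprM mulrnAl coefMn -mulrA.
rewrite (_ : (-1 : {poly rat}) ^+ r = ((-1) ^+ r)%:P); last first.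
  by rewrite rmorphXn rmorphN1.
rewrite -mulrA coefCM coefXnM /trunc_neg_binom coef_poly.
case: (ltnP M (b * r)) => hrM /=; first by rewrite !mulr0 mul0rn.
by rewrite (_ : (M - b * r < M.+1)%N) 1?ltnS ?leq_subr // -mulr_natr; ring.
Qed.

Lemma digit_poly_pow b n :
  digit_poly b ^+ n = \sum_(x : {ffun 'I_n -> 'I_b}) 'X^(\sum_k (x k : nat)).
Proof.
rewrite -[n in LHS]card_ord -prodr_const /digit_poly bigA_distr_bigA.
by apply: eq_bigr => x _; rewrite prodrXr.
Qed.

Lemma coef_digit_poly_pow_count b n M : (digit_poly b ^+ n.+1)`_M =
  (\sum_(x : {ffun 'I_n -> 'I_b}) \sum_(y < b)
     (((\sum_k (x k : nat)) + y == M)%N : nat))%:R.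
Proof.
rewrite exprSr digit_poly_pow mulr_suml coef_sum natr_sum; apply: eq_bigr => x _.
rewrite /digit_poly mulr_sumr coef_sum natr_sum; apply: eq_bigr => y _.
by rewrite -exprD coefXn eq_sym.
Qed.

Lemma count_last_offset b T M :
  (\sum_(y < b) ((T + y == M)%N : nat) = ((T <= M) && (M - T < b))%N)%N.
Proof.
case: (boolP ((T <= M) && (M - T < b))%N) => [/andP [hTM hMb]|hTM].
  rewrite (bigD1 (Ordinal hMb)) //= subnKC // eqxx big1 // => y /eqP hy.
  apply/eqP; rewrite eqb0; apply/eqP => e; apply: hy; apply: val_inj => /=; lia.
apply: big1 => y _; apply/eqP; rewrite eqb0; apply/negP => /eqP e.
by move/negP: hTM; have := ltn_ord y; lia.
Qed.

Lemma carry_stepP b d c s j : (0 < b)%N ->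
  (carry_step b d c s == j) =
  (0 <= c + s - d + j * b%:Z) && (c + s - d + j * b%:Z < b%:Z).
Proof.
move=> b_gt0; have bn0 : b%:Z != 0 by rewrite eqz_nat -lt0n.
set m := c + s - d.
have E : c + s - carry_digit b d c s = (m %/ b%:Z)%Z * b%:Z.
  by rewrite /carry_digit; have := divz_eq m b%:Z; rewrite -/m; lia.
rewrite /carry_step E divzN mulzK //; apply/eqP/andP.
  move=> <-; rewrite mulNr; have := divz_eq m b%:Z; have := modz_ge0 m bn0.
  have : (m %% b%:Z)%Z < b%:Z by apply: ltz_pmod; rewrite ltz_nat.
  lia.
move=> [h0 hb].
rewrite (_ : m = - j * b%:Z + (m + j * b%:Z)); last by ring.
by rewrite divzMDl // divz_small ?h0 // addr0 opprK.
Qed.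

(* The offset sum M for which n offsets plus one more reach carry j from c. *)
Definition carry_target (b n : nat) (d c j : int) : int :=
  (1 - n%:Z) * d - c - j * b%:Z + b%:Z - 1.

Lemma carry_step_count b n d c j (T : nat) : (0 < b)%N ->
  ((carry_step b d c (n%:Z * d + T%:Z) == j) : nat) =
  if 0 <= carry_target b n d c j
  then (\sum_(y < b) ((T + y == absz (carry_target b n d c j))%N : nat))%N
  else 0%N.
Proof.
move=> b_gt0; rewrite carry_stepP //.
case: (lerP 0 (carry_target b n d c j)) => htarget; last first.
  rewrite (_ : (_ && _) = false) //; apply/negP => /andP [h0 hb].
  by move: htarget; rewrite /carry_target; lia.
rewrite count_last_offset; set M := absz _.
have : carry_target b n d c j = M%:Z by rewrite /M gez0_abs.
rewrite /carry_target => hM; congr nat_of_bool.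
by apply/andP/andP => -[h1 h2]; split; lia.
Qed.

Lemma card_pred (T : finType) (P : pred T) :
  #|[set u | P u]| = (\sum_u (P u : nat))%N.
Proof.
rewrite cardsE -sum1_card big_mkcond /=.
by apply: eq_bigr => u _; rewrite unfold_in; case: (P _).
Qed.

Section CarriesProcess.

Variables (n b : nat) (d : int).

Definition extend_sample {t : nat} (u : sample n b t) (x : {ffun 'I_n -> 'I_b}) :
  sample n b t.+1 :=
  [ffun i : 'I_t.+1 => if (insub (val i) : option 'I_t) is Some i' then u i' else x].

Lemma digit_extend t u x i k :
  (i < t)%N -> digit d (@extend_sample t u x) i k = digit d u i k.
Proof.
move=> hi; rewrite /digit /extend_sample.
rewrite (insubT (fun i => i < t.+1)%N (ltnW hi : (i < t.+1)%N)).
by rewrite (insubT (fun i => i < t)%N hi) ffunE /= (insubT (fun i => i < t)%N hi).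
Qed.

Lemma digit_extend_last t u x (k : 'I_n) :
  digit d (@extend_sample t u x) t k = d + (x k : nat)%:Z.
Proof.
rewrite /digit /extend_sample (insubT (fun i => i < t.+1)%N (ltnSn t)).
rewrite (insubT (fun i => i < n)%N (ltn_ord k)) ffunE /= insubN ?ltnn //.
by congr (_ + Posz (nat_of_ord (x _))); apply: val_inj.
Qed.

Lemma carry_extend t u x k :
  (k <= t)%N -> carry d (@extend_sample t u x) k = carry d u k.
Proof.
elim: k => [|k IH] hk //=; rewrite IH 1?ltnW //.
by congr carry_step; apply: eq_bigr => l _; rewrite digit_extend.
Qed.

Lemma carry_extend_last t u x : carry d (@extend_sample t u x) t.+1 =
  carry_step b d (carry d u t) (\sum_(k < n) (d + (x k : nat)%:Z)).
Proof.
rewrite /= carry_extend //; congr carry_step.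
by apply: eq_bigr => k _; rewrite digit_extend_last.
Qed.

Lemma card_extend_sample t (E : pred (sample n b t.+1)) :
  #|[set w | E w]| =
  (\sum_(u : sample n b t) \sum_(x : {ffun 'I_n -> 'I_b}) (E (extend_sample u x) : nat))%N.
Proof.
have extend_bij :
    bijective (fun p : sample n b t * {ffun 'I_n -> 'I_b} => extend_sample p.1 p.2).
  exists (fun w : sample n b t.+1 =>
      ([ffun i : 'I_t => w (widen_ord (leqnSn t) i)], w ord_max)).
    move=> [u x] /=; congr pair; last by rewrite ffunE /= insubN ?ltnn.
    apply/ffunP => i; rewrite !ffunE /= (insubT (fun i => i < t)%N (ltn_ord i)).
    by congr (u _); apply: val_inj.
  move=> w; apply/ffunP => i; rewrite ffunE /=.
  case: insubP => [i' _ vi'|hi]; first by rewrite ffunE; congr (w _); apply: val_inj.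
  by congr (w _); apply: val_inj => /=; have := ltn_ord i; lia.
rewrite card_pred pair_big /= (reindex _ (onW_bij _ extend_bij)).
by apply: eq_bigr.
Qed.

Definition step_count (c j : int) : nat :=
  #|[set x : {ffun 'I_n -> 'I_b} | carry_step b d c (\sum_k (d + (x k : nat)%:Z)) == j]|.

Lemma card_joint_event t (i j : int) :
  #|[set w : sample n b t.+1 | (carry d w t == i) && (carry d w t.+1 == j)]| =
  (#|[set u : sample n b t | carry d u t == i]| * step_count i j)%N.
Proof.
rewrite card_extend_sample card_pred /step_count card_pred big_distrl.
apply: eq_bigr => u _.
under [in LHS]eq_bigr => x _ do rewrite carry_extend_last carry_extend //.
case: (boolP (carry d u t == i)) => [/eqP <-|hu] /=; last by rewrite mul0n big1.
by rewrite mul1n.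
Qed.

(* The event C_t = i does not constrain the last row. *)
Lemma card_current_event t (i : int) :
  #|[set w : sample n b t.+1 | carry d w t == i]| =
  (#|[set u : sample n b t | carry d u t == i]| * b ^ n)%N.
Proof.
rewrite card_extend_sample card_pred big_distrl /=; apply: eq_bigr => u _.
under eq_bigr => x _ do rewrite carry_extend //.
by rewrite sum_nat_const card_ffun !card_ord mulnC.
Qed.

Lemma trans_prob_step_count t (i j : int) : (0 < b)%N ->
  0 < prob_carry n b d t i ->
  trans_prob n b d t i j = (step_count i j)%:R / (b ^ n)%:R.
Proof.
move=> b_gt0 hpos.
set A := #|[set u : sample n b t | carry d u t == i]|.
have A_neq0 : A != 0%N.
  by apply/eqP => hA0; move: hpos; rewrite /prob_carry /prob -/A hA0 mul0r ltxx.
have card_neq0 : (#|{: sample n b t.+1}|%:R : rat) != 0.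
  by rewrite pnatr_eq0 -lt0n !card_ffun !card_ord !expn_gt0 b_gt0.
rewrite /trans_prob /prob card_joint_event card_current_event -/A.
by rewrite invf_div mulrA divfK // !natrM -mulf_div divff ?pnatr_eq0 // mul1r.
Qed.

Lemma step_count_coef (c j : int) : (0 < b)%N ->
  (step_count c j)%:R =
  if 0 <= carry_target b n d c j
  then (digit_poly b ^+ n.+1)`_(absz (carry_target b n d c j)) else 0.
Proof.
move=> b_gt0; rewrite coef_digit_poly_pow_count /step_count card_pred.
have offset_sum (x : {ffun 'I_n -> 'I_b}) :
    \sum_k (d + (x k : nat)%:Z) = n%:Z * d + (\sum_k (x k : nat))%N%:Z.
  rewrite big_split /= sumr_const card_ord -mulr_natl natz.
  by congr (_ + _); rewrite -natz natr_sum; apply: eq_bigr => k _; rewrite natz.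
under [in LHS]eq_bigr => x _ do rewrite offset_sum carry_step_count //.
by case: ifP => _ //; rewrite big1.
Qed.

End CarriesProcess.

Lemma binz_nat (k n : nat) : binz k%:Z n = ('C(k, n))%:R.
Proof.
have falling : \prod_(m < n) (k%:Z - m%:Z) = (k ^_ n)%:Z.
  elim: n => [|n IH]; first by rewrite big_ord0.
  rewrite big_ord_recr /= IH ffactnSr.
  by case: (leqP n k) => h; [rewrite PoszM subzn | rewrite ffact_small // mul0r].
rewrite /binz -rmorph_prod /= falling -bin_ffact -pmulrn natrM mulfK //.
by rewrite pnatr_eq0 -lt0n fact_gt0.
Qed.

Lemma sum_extend (R : nmodType) (F : nat -> R) a c : (a <= c)%N ->
  (forall r, (a <= r < c)%N -> F r = 0) ->
  \sum_(r < a) F r = \sum_(r < c) F r.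
Proof.
move=> hac hF; rewrite -!(big_mkord xpredT) (@big_cat_nat _ _ _ a 0 c _ _ (leq0n a) hac) /=.
by rewrite [X in _ + X]big1_seq ?addr0 // => r /andP [_]; rewrite mem_index_iota; apply: hF.
Qed.

Lemma inclusion_exclusion_range n b M : (0 < b)%N ->
  \sum_(r < n.+2) (-1) ^+ r * ('C(n.+1, r))%:R *
      (if (b * r <= M)%N then ('C(M - b * r + n, n))%:R else 0) =
  \sum_(r < (M %/ b).+1) (-1) ^+ r * ('C(n.+1, r))%:R * ('C(M - b * r + n, n))%:R :> rat.
Proof.
move=> b_gt0.
pose G r := (-1) ^+ r * ('C(n.+1, r))%:R *
      (if (b * r <= M)%N then ('C(M - b * r + n, n))%:R else 0 : rat).
transitivity (\sum_(r < (M %/ b).+1 + n.+2) G r).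
  apply: sum_extend; first by rewrite addnC ltn_addr.
  by move=> r /andP [hr _]; rewrite /G bin_small ?mulr0 ?mul0r.
transitivity (\sum_(r < (M %/ b).+1) G r); last first.
  apply: eq_bigr => r _; rewrite /G (_ : (b * r <= M)%N) //.
  by rewrite mulnC -leq_divRL // -ltnS ltn_ord.
symmetry; apply: sum_extend; first by rewrite leq_addr.
move=> r /andP [hr _]; rewrite /G (_ : (b * r <= M)%N = false) ?mulr0 //.
by apply/negbTE; rewrite -ltnNge mulnC -ltn_divLR.
Qed.

Lemma step_count_formula (b n : nat) (d i j : int) : (0 < b)%N ->
  (step_count n b d i j)%:R =
  let U : int := - j + 1 + ((- i - 1 + (1 - n%:Z) * d) %/ b%:Z)%Z in
  if U < 0 then 0 else
   \sum_(r < (absz U).+1)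
     (-1) ^+ r * ('C(n.+1, r))%:R *
     binz (n%:Z - b%:Z * (j - 1 + r%:Z) - i - 1 + (1 - n%:Z) * d) n.
Proof.
move=> b_gt0; have bn0 : b%:Z != 0 by rewrite eqz_nat -lt0n.
rewrite step_count_coef //= (_ : - j + 1 + _ = (carry_target b n d i j %/ b%:Z)%Z).
  case: (lerP 0 (carry_target b n d i j)) => htarget; last first.
    by rewrite ltNge divz_ge0 ?ltz_nat // -ltNge htarget.
  set M := absz (carry_target b n d i j).
  have hM : carry_target b n d i j = M%:Z by rewrite /M gez0_abs.
  rewrite hM divz_nat /= coef_digit_poly_pow inclusion_exclusion_range //.
  apply: eq_bigr => r _; congr (_ * _).
  have hr : (b * r <= M)%N.
    by rewrite mulnC -leq_divRL // -ltnS ltn_ord.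
  move: hM; rewrite /carry_target => hM.
  rewrite (_ : _ - _ + _ = (M - b * r + n)%N%:Z) ?binz_nat //.
  by rewrite PoszD -(subzn hr) PoszM; lia.
rewrite /carry_target (_ : _ + b%:Z - 1 = (1 - j) * b%:Z + (- i - 1 + (1 - n%:Z) * d)).
  by rewrite divzMDl //; ring.
by ring.
Qed.

Theorem theorem3 (b n : nat) (d : int) (i j : int) (t : nat) :
  (2 <= b)%N -> (1 <= n)%N ->
  d <= 0 -> 0 <= d + (b%:Z - 1) ->
  state_space n b d i -> state_space n b d j ->
  0 < prob_carry n b d t i ->
  trans_prob n b d t i j = trans_formula n b d i j.
Proof.
move=> b_ge2 _ _ _ _ _ hpos.
have b_gt0 : (0 < b)%N by apply: leq_trans b_ge2.
rewrite trans_prob_step_count // step_count_formula //.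
by rewrite /trans_formula mulrC div1r natrX.
Qed.
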